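(* Let $X,Y$ be a section-pair with $m\ge 2$ chords. Then there is a parallel collection of subsection pairs $X_1,Y_1;\dots;X_t,Y_t$ such that $\sum_{i=1}^t e(X_i,Y_i)\ge m/24$ and one of the following holds: (1) for every $i$, there is a vertex of $X_i\cup Y_i$ incident to at least $\frac{e(X_i,Y_i)}{6\log m}$ chords of $E(X_i,Y_i)$; (2) for every $i$, there is a chord in $E(X_i,Y_i)$ which interlaces at least $\frac{e(X_i,Y_i)}{6\log m}$ of the chords in $E(X_i,Y_i)$.
   Context: Logarithms are base 2. A section-pair in a graph $G$ is a pair $X,Y$ of vertex-disjoint paths; the two endpoints of $X$ are designated its top $x^{t}$ and bottom $x^{b}$, and those of $Y$ its top $y^t$ and bottom $y^b$. For distinct $x_1,x_2\in X$, $x_1$ is above $x_2$ if $x_1$ is closer to $x^t$ along $X$ than $x_2$, otherwise below; similarly in $Y$. For vertex sets $A,B\subseteq X$ (or $\subseteq Y$), $A$ is above (resp. below) $B$ if every vertex of $A$ is above (resp. below) every vertex of $B$. A chord is an edge of $G$ with one endpoint in $X$ and one in $Y$. Two chords $(x_1,y_1),(x_2,y_2)$ ($x_i\in X,y_i\in Y$) with no common vertex are parallel if for some $i\in\{1,2\}$, $x_i$ is above $x_{3-i}$ and $y_i$ is above $y_{3-i}$; otherwise they are interlacing (a chord interlaces another). A subsection pair of $X,Y$ is a section-pair $X',Y'$ where $X'$ is a subpath of $X$ and $Y'$ a subpath of $Y$ (tops being the endpoints closer to $x^t$, resp. $y^t$); $E(X',Y')$ is the set of chords with one endpoint in $X'$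 and one in $Y'$, and $e(X',Y')=|E(X',Y')|$. A collection $X_1,Y_1;\dots;X_t,Y_t$ of subsection pairs, with the $X_i$ pairwise vertex-disjoint and the $Y_i$ pairwise vertex-disjoint, labeled so that $X_i$ is below $X_j$ for all $i<j$, is parallel if also $Y_i$ is below $Y_j$ for all $i<j$. *)

From mathcomp Require Import all_boot.
From Stdlib Require Import Reals.

Set Implicit Arguments.
Unset Strict Implicit.
Unset Printing Implicit Defensive.

(* A path of the graph, given as the sequence of its vertices from its top
   (head of the sequence) to its bottom (last element): nonempty, no repeated
   vertex, consecutive vertices adjacent. *)
Definition is_path (T : eqType) (e : rel T) (s : seq T) : bool :=
  if s is x :: p then path e x p && uniq s else false.

Definition above (T : eqType) (X : seq T) (a b : T) : bool :=
  [&& a \in X, b \in X & index a X < index b X].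

Definition chords (T : finType) (e : rel T) (X' Y' : seq T) : {set T * T} :=
  [set c : T * T | [&& c.1 \in X', c.2 \in Y' & e c.1 c.2]].

Definition parallel_chords (T : eqType) (X Y : seq T) (c d : T * T) : bool :=
  [&& c.1 != d.1, c.2 != d.2 &
      (above X c.1 d.1 && above Y c.2 d.2) || (above X d.1 c.1 && above Y d.2 c.2)].

Definition interlace (T : eqType) (X Y : seq T) (c d : T * T) : bool :=
  [&& c.1 != d.1, c.2 != d.2 & ~~ parallel_chords X Y c d].

Definition below_in (T : eqType) (X : seq T) (A B : seq T) : bool :=
  all (fun a => all (fun b => above X b a) B) A.

Definition subsection (T : eqType) (X X' : seq T) : bool :=
  (X' != [::]) && infix X' X.

(* A parallel collection X_1,Y_1; ...; X_t,Y_t of subsection pairs of X, Y,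
   given as the sequence [:: (X_1,Y_1); ...; (X_t,Y_t)] (index i-1 <-> i). *)
Definition parallel_collection (T : finType) (X Y : seq T)
    (s : seq (seq T * seq T)) : Prop :=
  (forall i, i < size s ->
     subsection X (nth ([::], [::]) s i).1 /\ subsection Y (nth ([::], [::]) s i).2) /\
  (forall i j, i < j -> j < size s ->
     [/\ [disjoint (nth ([::], [::]) s i).1 & (nth ([::], [::]) s j).1],
         [disjoint (nth ([::], [::]) s i).2 & (nth ([::], [::]) s j).2],
         below_in X (nth ([::], [::]) s i).1 (nth ([::], [::]) s j).1 &
         below_in Y (nth ([::], [::]) s i).2 (nth ([::], [::]) s j).2]).

Definition log2 (x : R) : R := (ln x / ln 2)%R.

From mathcomp Require Import all_boot zify.
From Stdlib Require Import Reals Lra Classical ClassicalEpsilon.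

Set Implicit Arguments.
Unset Strict Implicit.
Unset Printing Implicit Defensive.

(* Each chord (x, y) is placed at the grid point (position of x in X,
   position of y in Y); a box of the grid then is a subsection pair, and a
   chain of boxes each lying after the previous one in both coordinates is a
   parallel collection.  A set of chords is heavy when a grid line, or the set
   of chords crossing one of them, holds a 1/th fraction of it.  A box that is
   not heavy is cut at a median column x = a and at the least height y of a
   chord beyond it: the box before and the box after the cut hold all chords
   except those on the two cut lines and those of one corner, all of which
   cross a single chord; so they keep a (1 - 3/th) fraction (split_box).
   Recursing (decompose_box) on a box with fewer than 2^(k+1) chords gives a
   chain of heavy boxes keeping a (1 - 3/th)^k fraction, which is at least
   1/2 for th = 6 log m and k = floor(log m) (threshold_bounds).  Finally the
   boxes of one kind of heaviness carry half of that (select_heavy_kind). *)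

Lemma bernoulli_ineq (d : R) (k : nat) :
  (0 <= d <= 1)%R -> (1 - INR k * d <= (1 - d) ^ k)%R.
Proof.
move=> [d_ge0 d_le1]; elim: k => [|k IH]; first by rewrite /=; lra.
rewrite S_INR /=; have k_ge0 := pos_INR k.
have : (0 <= (1 - d) * ((1 - d) ^ k - (1 - INR k * d)))%R.
  by apply: Rmult_le_pos; lra.
have : (0 <= INR k * (d * d))%R by apply: Rmult_le_pos => //; nra.
nra.
Qed.

Lemma INR_expn (a k : nat) : INR (expn a k) = (INR a ^ k)%R.
Proof. by elim: k => // k IH; rewrite expnS mult_INR IH. Qed.

Lemma trunc_log_le_log2 (m : nat) : 0 < m -> (INR (trunc_log 2 m) <= log2 (INR m))%R.
Proof.
move=> m_gt0; have ln2_gt0 : (0 < ln 2)%R by have := ln_lt_2; lra.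
have pow_le_m : (2 ^ trunc_log 2 m <= INR m)%R.
  rewrite -[2%R]/(INR 2) -INR_expn; apply: le_INR; apply/leP; exact: trunc_logP.
have : (ln (2 ^ trunc_log 2 m) <= ln (INR m))%R.
  case: pow_le_m => [lt_m | <-]; last exact: Rle_refl.
  by left; apply: ln_increasing => //; apply: pow_lt; lra.
rewrite ln_pow; last lra.
rewrite /log2 => h; apply/(Rmult_le_reg_r (ln 2)) => //.
by rewrite /Rdiv Rmult_assoc Rinv_l ?Rmult_1_r //; lra.
Qed.

Lemma threshold_bounds (m : nat) : 2 <= m ->
  let th := (6 * log2 (INR m))%R in
  (3 <= th)%R /\ (1 / 2 <= (1 - 3 / th) ^ trunc_log 2 m)%R.
Proof.
move=> m_ge2; set k := trunc_log 2 m; set L := log2 (INR m) => th.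
have k_le_L : (INR k <= L)%R by apply: trunc_log_le_log2; lia.
have k_ge1 : (1 <= INR k)%R.
  by apply: (le_INR 1); apply/leP; rewrite trunc_log_gt0; lia.
have th_ge3 : (3 <= th)%R by rewrite /th; lra.
split=> //.
have d_eq : (3 / th = / (2 * L))%R by rewrite /th; field; lra.
have d_gt0 : (0 < / (2 * L))%R by apply: Rinv_0_lt_compat; lra.
have kd_le : (INR k * / (2 * L) <= 1 / 2)%R.
  apply: (Rle_trans _ (L * / (2 * L))); last by right; field; lra.
  by apply: Rmult_le_compat_r => //; left.
have d_bounds : (0 <= 3 / th <= 1)%R by rewrite d_eq; nra.
have := bernoulli_ineq k d_bounds; rewrite d_eq; lra.
Qed.

(* A box is a product [xlo, xhi) x [ylo, yhi) of half-open intervals of nat. *)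
Notation box := ((nat * nat) * (nat * nat))%type.

Definition xlo (b : box) : nat := let: ((l, _), _) := b in l.
Definition xhi (b : box) : nat := let: ((_, h), _) := b in h.
Definition ylo (b : box) : nat := let: (_, (l, _)) := b in l.
Definition yhi (b : box) : nat := let: (_, (_, h)) := b in h.

Definition subbox (b b' : box) : bool :=
  [&& xlo b <= xlo b', xhi b' <= xhi b, ylo b <= ylo b' & yhi b' <= yhi b].

Definition before (b b' : box) : bool := (xhi b <= xlo b') && (yhi b <= ylo b').

Lemma subbox_refl (b : box) : subbox b b.
Proof. by rewrite /subbox !leqnn. Qed.

Lemma subbox_trans (b1 b2 b3 : box) : subbox b1 b2 -> subbox b2 b3 -> subbox b1 b3.
Proof. rewrite /subbox; lia. Qed.

Lemma before_subbox (b1 b2 b1' b2' : box) :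
  before b1 b2 -> subbox b1 b1' -> subbox b2 b2' -> before b1' b2'.
Proof. rewrite /before /subbox; lia. Qed.

Section Grid.
Variables (P : finType) (C : {set P}) (px py : P -> nat) (th : R).
Hypothesis th_ge3 : (3 <= th)%R.

Definition in_box (b : box) (c : P) : bool :=
  (xlo b <= px c < xhi b) && (ylo b <= py c < yhi b).

Definition pts (b : box) : {set P} := [set c in C | in_box b c].

Definition crossing (c d : P) : bool :=
  ((px c < px d) && (py d < py c)) || ((px d < px c) && (py c < py d)).

Definition heavy_line (f : P -> nat) (S : {set P}) : Prop :=
  exists2 c, c \in S & (INR #|S| / th <= INR #|[set d in S | f d == f c]|)%R.

Definition heavy_cross (S : {set P}) : Prop :=
  exists2 c, c \in S & (INR #|S| / th <= INR #|[set d in S | crossing c d]|)%R.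

Definition heavy (S : {set P}) : Prop :=
  [\/ heavy_line px S, heavy_line py S | heavy_cross S].

Lemma inv_th : (0 < / th)%R /\ (th * / th = 1)%R.
Proof. split; [apply: Rinv_0_lt_compat | field]; lra. Qed.

Lemma share_bounds (n : nat) : (0 <= INR n / th <= INR n)%R.
Proof. have [? ?] := inv_th; have := pos_INR n; rewrite /Rdiv; nra. Qed.

Lemma light_line (f : P -> nat) (S : {set P}) (a : nat) :
  ~ heavy_line f S -> (INR #|[set d in S | f d == a]| <= INR #|S| / th)%R.
Proof.
move=> light; case: (set_0Vmem [set d in S | f d == a]) => [-> | [c]].
  by rewrite cards0; case: (share_bounds #|S|).
rewrite inE => /andP[cS /eqP <-]; apply: Rlt_le; apply: Rnot_le_lt => heavy_c.
by apply: light; exists c.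
Qed.

(* A nonempty set that is not heavy along f has at least two points, since
   the line through any point contains that point. *)
Lemma light_card_gt1 (f : P -> nat) (S : {set P}) :
  0 < #|S| -> ~ heavy_line f S -> 1 < #|S|.
Proof.
case/card_gt0P=> c cS light; have := light_line (f c) light.
have : 1 <= #|[set d in S | f d == f c]| by apply/card_gt0P; exists c; rewrite inE cS eqxx.
move=> /leP/le_INR; rewrite [INR 1]/= => line_ge1 line_light.
have n_eq : INR #|S| = (th * (INR #|S| / th))%R by field; lra.
by apply/leP/INR_lt; rewrite [INR 1]/=; nra.
Qed.

Lemma median_split (f : P -> nat) (S : {set P}) (lo hi : nat) :
  0 < #|S| -> {in S, forall c, lo <= f c < hi} ->
  exists a, [/\ lo <= a < hi, (#|[set c in S | f c < a]|).*2 <= #|S|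
              & (#|[set c in S | a < f c]|).*2 < #|S|].
Proof.
move=> S_gt0 S_range; pose below a := #|[set c in S | f c < a]|.
have below_lo : below lo = 0.
  apply/eqP; rewrite cards_eq0; apply/eqP/setP => c; rewrite !inE.
  by apply/negbTE/andP => -[/S_range]; lia.
have below_hi a : hi <= a -> below a = #|S|.
  move=> hi_le; apply: eq_card => c; rewrite inE.
  by case cS: (c \in S) => //=; have := S_range c cS; lia.
have half_lt_hi a : (below a).*2 <= #|S| -> a < hi.
  by rewrite ltnNge; apply: contraTN => /below_hi ->; lia.
have half_lo : exists a, (below a).*2 <= #|S| by exists lo; rewrite below_lo.
have [a half_a a_max] := ex_maxnP half_lo (fun a h => ltnW (half_lt_hi a h)).
have below_above : below a.+1 + #|[set c in S | a < f c]| = #|S|.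
  rewrite -(cardsID [set c | f c < a.+1] S); congr (_ + _); apply: eq_card => c;
    by rewrite !inE // andbC ltnNge.
have /negP half_a1 : ~~ ((below a.+1).*2 <= #|S|).
  by apply/negP => /a_max; rewrite ltnn.
exists a; split=> //; last by lia.
by rewrite (a_max lo) ?below_lo ?half_lt_hi.
Qed.

Lemma split_height (b : box) (a : nat) : 0 < #|pts b| ->
  exists y, [/\ ylo b <= y <= yhi b,
    {in pts b, forall d, a < px d -> y <= py d}
    & y = yhi b \/ exists2 q, q \in pts b & (a < px q) && (py q == y)].
Proof.
have in_b c : c \in pts b -> (xlo b <= px c < xhi b) && (ylo b <= py c < yhi b).
  by rewrite inE => /andP[].
case/card_gt0P=> c0 /in_b c0_in.
case: (pickP [pred c | (c \in pts b) && (a < px c)]) => [p /= /andP[pb ap] | none].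
- have pP : (p \in pts b) && (a < px p) by rewrite pb.
  have [q /andP[qb aq] q_min] :=
    @arg_minnP _ p (fun c => (c \in pts b) && (a < px c)) py pP.
  exists (py q); split; last by right; exists q; rewrite // aq eqxx.
  + by have := in_b q qb; lia.
  + by move=> d db ad; apply: q_min; rewrite db.
- exists (yhi b); split; last by left.
  + by lia.
  + by move=> d db ad; have := none d; rewrite /= db ad.
Qed.

Definition corner (b : box) (a y : nat) : {set P} :=
  [set d in pts b | (px d < a) && (y < py d)].

(* The corner is light: each of its points crosses the point of minimal y
   beyond the cut. *)
Lemma light_corner (b : box) (a y : nat) :
  ~ heavy_cross (pts b) ->
  (y = yhi b \/ exists2 q, q \in pts b & (a < px q) && (py q == y)) ->
  (INR #|corner b a y| <= INR #|pts b| / th)%R.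
Proof.
move=> light [y_top | [q qb /andP[aq /eqP qy]]].
- have -> : corner b a y = set0.
    apply/setP => d; rewrite !inE y_top.
    by apply/negbTE; apply/andP => -[/andP[_ /andP[_]]]; lia.
  by rewrite cards0; case: (share_bounds #|pts b|).
- apply: Rle_trans (Rlt_le _ _ (Rnot_le_lt _ _ (fun h => light (ex_intro2 _ _ q qb h)))).
  apply/le_INR/leP/subset_leq_card/subsetP => d; rewrite !inE /crossing.
  by case/andP=> -> /andP[da yd]; apply/orP; right; lia.
Qed.

Definition low_box (b : box) (a y : nat) : box := ((xlo b, a), (ylo b, y)).
Definition high_box (b : box) (a y : nat) : box := ((a.+1, xhi b), (y.+1, yhi b)).

Lemma box_cover (b : box) (a y : nat) :
  {in pts b, forall d, a < px d -> y <= py d} ->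
  pts b \subset pts (low_box b a y) :|: pts (high_box b a y)
    :|: [set d in pts b | px d == a] :|: [set d in pts b | py d == y]
    :|: corner b a y.
Proof.
move=> y_min; apply/subsetP => c cb; have := y_min c cb; move: cb.
rewrite !inE /in_box /low_box /high_box /= => /andP[-> in_c] /=.
by rewrite in_c; lia.
Qed.

Lemma cover_count (S A B R1 R2 R3 : {set P}) :
  S \subset A :|: B :|: R1 :|: R2 :|: R3 ->
  (INR #|R1| <= INR #|S| / th)%R -> (INR #|R2| <= INR #|S| / th)%R ->
  (INR #|R3| <= INR #|S| / th)%R ->
  (INR #|S| * (1 - 3 / th) <= INR #|A| + INR #|B|)%R.
Proof.
move=> cover light1 light2 light3.
have card_le : #|S| <= #|A| + #|B| + #|R1| + #|R2| + #|R3|.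
  apply: leq_trans (subset_leq_card cover) _.
  do 3 (apply: leq_trans (leq_card_setU _ _).1 _; rewrite leq_add2r).
  exact: (leq_card_setU _ _).1.
move/leP/le_INR: card_le; rewrite !plus_INR => card_le.
have -> : (INR #|S| * (1 - 3 / th) = INR #|S| - 3 * (INR #|S| / th))%R by field; lra.
lra.
Qed.

Lemma split_box (b : box) : 0 < #|pts b| -> ~ heavy (pts b) ->
  exists lo hi : box,
    [/\ subbox b lo, subbox b hi, before lo hi,
        (#|pts lo|).*2 <= #|pts b| /\ (#|pts hi|).*2 < #|pts b|
      & (INR #|pts b| * (1 - 3 / th) <= INR #|pts lo| + INR #|pts hi|)%R].
Proof.
move=> b_gt0 not_heavy.
have [light_x light_y light_c] :
    [/\ ~ heavy_line px (pts b), ~ heavy_line py (pts b) & ~ heavy_cross (pts b)].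
  by split=> h; apply: not_heavy; [apply: Or31 | apply: Or32 | apply: Or33].
have in_b c : c \in pts b -> (xlo b <= px c < xhi b) && (ylo b <= py c < yhi b).
  by rewrite inE => /andP[].
have [a [a_range half_low half_high]] :=
  median_split b_gt0 (fun c cb => proj1 (andP (in_b c cb))).
have [y [y_range y_min y_witness]] := split_height a b_gt0.
exists (low_box b a y), (high_box b a y); split.
- by rewrite /subbox /low_box /=; lia.
- by rewrite /subbox /high_box /=; lia.
- by rewrite /before /low_box /high_box /=; lia.
- split.
  + apply: leq_trans half_low; rewrite leq_double.
    apply/subset_leq_card/subsetP => c; rewrite !inE /in_box /low_box /=.
    by case/andP=> cC in_low; rewrite cC /=; lia.
  + apply: leq_ltn_trans half_high; rewrite leq_double.
    apply/subset_leq_card/subsetP => c; rewrite !inE /in_box /high_box /=.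
    by case/andP=> cC in_high; rewrite cC /=; lia.
- apply: cover_count (box_cover y_min) (light_line a light_x) (light_line y light_y) _.
  exact: light_corner.
Qed.

Definition decomposition (b : box) (k : nat) (L : seq box) : Prop :=
  [/\ {in L, forall b', [/\ subbox b b', 0 < #|pts b'| & heavy (pts b')]},
      pairwise before L
    & (INR #|pts b| * (1 - 3 / th) ^ k <= INR (\sum_(b' <- L) #|pts b'|))%R].

Lemma loss_factor_bounds (k : nat) : (0 <= (1 - 3 / th) ^ k <= 1)%R.
Proof.
have [inv_pos inv_th1] := inv_th.
have q_bounds : (0 <= 1 - 3 / th <= 1)%R by rewrite /Rdiv; nra.
split; first by apply: pow_le; case: q_bounds.
by rewrite -[X in (_ <= X)%R](pow1 k); apply: pow_incr.
Qed.

Lemma trivial_decomposition (b : box) (k : nat) :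
  #|pts b| = 0 \/ heavy (pts b) -> exists L, decomposition b k L.
Proof.
have [q_ge0 q_le1] := loss_factor_bounds k.
case=> [b_empty | b_heavy].
  by exists [::]; split=> //; rewrite big_nil b_empty /=; lra.
have b_gt0 : 0 < #|pts b|.
  case: b_heavy => -[c cb _]; apply/card_gt0P; by exists c.
exists [:: b]; split=> //.
- by move=> b'; rewrite inE => /eqP ->; rewrite subbox_refl.
- by rewrite big_seq1; have := pos_INR #|pts b|; nra.
Qed.

Lemma join_decompositions (b lo hi : box) (k : nat) (L1 L2 : seq box) :
  subbox b lo -> subbox b hi -> before lo hi ->
  (INR #|pts b| * (1 - 3 / th) <= INR #|pts lo| + INR #|pts hi|)%R ->
  decomposition lo k L1 -> decomposition hi k L2 ->
  decomposition b k.+1 (L1 ++ L2).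
Proof.
move=> sub_lo sub_hi lo_hi share [L1_ok L1_chain L1_sum] [L2_ok L2_chain L2_sum].
split.
- move=> b'; rewrite mem_cat => /orP[] b'L;
    [have [sub ? ?] := L1_ok b' b'L | have [sub ? ?] := L2_ok b' b'L].
  + by split=> //; apply: subbox_trans sub.
  + by split=> //; apply: subbox_trans sub.
- rewrite pairwise_cat L1_chain L2_chain andbT andbT; apply/allrelP => b1 b2 b1L b2L.
  have [sub1 _ _] := L1_ok b1 b1L; have [sub2 _ _] := L2_ok b2 b2L.
  exact: before_subbox lo_hi sub1 sub2.
- have [q_ge0 _] := loss_factor_bounds k.
  rewrite big_cat plus_INR /= (Rmult_comm (1 - 3 / th)) -Rmult_assoc.
  have := Rmult_le_compat_r _ _ _ q_ge0 share; lra.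
Qed.

Lemma decompose_box (k : nat) (b : box) :
  #|pts b| < expn 2 k.+1 -> exists L, decomposition b k L.
Proof.
elim: k b => [|k IH] b b_small;
  have [trivial_b | /not_or_and[b_nonempty light_b]] :=
    classic (#|pts b| = 0 \/ heavy (pts b));
  try exact: trivial_decomposition;
  have b_gt0 : 0 < #|pts b| by rewrite lt0n; apply/eqP.
- (* A box with at most one point is empty or heavy. *)
  have light_x : ~ heavy_line px (pts b) by move=> h; apply: light_b; apply: Or31.
  by have := light_card_gt1 b_gt0 light_x; rewrite expnS expn0 in b_small; lia.
- have [lo [hi [sub_lo sub_hi lo_hi [half_lo half_hi] share]]] := split_box b_gt0 light_b.
  have [|L1 L1_dec] := IH lo; first by move: b_small; rewrite !expnS; lia.
  have [|L2 L2_dec] := IH hi; first by move: b_small; rewrite !expnS; lia.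
  by exists (L1 ++ L2); apply: join_decompositions L1_dec L2_dec.
Qed.

End Grid.

Definition segment (T : Type) (s : seq T) (i j : nat) : seq T := drop i (take j s).

Lemma mem_drop_uniq (T : eqType) (s : seq T) (i : nat) (x : T) : uniq s ->
  (x \in drop i s) = (x \in s) && (i <= index x s).
Proof.
move=> s_uniq; case s_x : (x \in s); last first.
  by apply/negbTE; apply: contraFN s_x; apply: mem_drop.
rewrite leqNgt -(in_take i s_x) /=.
move: s_uniq s_x; rewrite -{1 2}(cat_take_drop i s) cat_uniq mem_cat.
case/and3P=> _ /hasPn disj _; case x_drop : (x \in drop i s).
- by have := disj x x_drop.
- by rewrite orbF => ->.
Qed.

Lemma mem_segment (T : eqType) (s : seq T) (i j : nat) (x : T) : uniq s ->
  (x \in segment s i j) = [&& x \in s, i <= index x s & index x s < j].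
Proof.
move=> s_uniq; rewrite mem_drop_uniq ?take_uniq //.
case s_x : (x \in s); last by rewrite (contraFF (@mem_take _ _ _ _) s_x).
rewrite (in_take j s_x); case: ltnP => x_lt /=; last by rewrite andbF.
have x_take : x \in take j s by rewrite (in_take j s_x).
by rewrite -[in RHS](cat_take_drop j s) index_cat x_take andbT.
Qed.

Lemma segment_infix (T : eqType) (s : seq T) (i j : nat) : infix (segment s i j) s.
Proof. exact: infix_trans (infix_drop _ _) (infix_take _ _). Qed.

Lemma segments_ordered (T : finType) (s : seq T) (i j i' j' : nat) :
  uniq s -> j <= i' ->
  [disjoint segment s i' j' & segment s i j] /\
  below_in s (segment s i' j') (segment s i j).
Proof.
move=> s_uniq j_le; split.
- rewrite disjoint_has; apply/hasPn => x; rewrite !mem_segment //.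
  by case/and3P=> _ i_le _; apply/negP => /and3P[_ _]; lia.
- apply/allP => x; rewrite mem_segment // => /and3P[s_x i_le _].
  apply/allP => z; rewrite mem_segment // => /and3P[s_z _ z_lt].
  by rewrite /above s_x s_z /=; lia.
Qed.

Lemma is_path_uniq (T : eqType) (e : rel T) (s : seq T) : is_path e s -> uniq s.
Proof. by case: s => // x p /andP[]. Qed.

Definition holds (A : Prop) : bool :=
  if excluded_middle_informative A then true else false.

Lemma holdsP (A : Prop) : reflect A (holds A).
Proof. by rewrite /holds; case: excluded_middle_informative => a; constructor. Qed.

Section ChordGrid.
Variables (T : finType) (e : rel T) (X Y : seq T).
Hypotheses (X_uniq : uniq X) (Y_uniq : uniq Y).

Definition xpos (c : T * T) : nat := index c.1 X.
Definition ypos (c : T * T) : nat := index c.2 Y.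

Local Notation cpts := (pts (chords e X Y) xpos ypos).

Definition section_pair (b : box) : seq T * seq T :=
  (segment X (xlo b) (xhi b), segment Y (ylo b) (yhi b)).

Lemma chords_section (b : box) :
  chords e (section_pair b).1 (section_pair b).2 = cpts b.
Proof.
apply/setP => c; rewrite !inE /in_box /xpos /ypos !mem_segment //.
by case: (c.1 \in X); case: (c.2 \in Y); case: (e _ _); rewrite /= ?andbF //; lia.
Qed.

Lemma pts_whole : cpts ((0, size X), (0, size Y)) = chords e X Y.
Proof.
apply/setP => c; rewrite !inE /in_box /xpos /ypos /= !index_mem.
by case: (c.1 \in X); case: (c.2 \in Y); rewrite /= ?andbT ?andbF.
Qed.

Lemma section_pair_subsection (b : box) : 0 < #|cpts b| ->
  subsection X (section_pair b).1 /\ subsection Y (section_pair b).2.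
Proof.
case/card_gt0P => c; rewrite -chords_section inE => /and3P[c1 c2 _].
by rewrite /subsection !segment_infix !andbT; split; apply/eqP => empty;
  [rewrite empty in c1 | rewrite empty in c2].
Qed.

(* A chain of nonempty boxes, each before the next, gives a parallel
   collection of subsection pairs (listed bottom-up, hence the reversal). *)
Lemma parallel_of_chain (L : seq box) :
  {in L, forall b, 0 < #|cpts b|} -> pairwise before L ->
  parallel_collection X Y (map section_pair (rev L)).
Proof.
move=> L_nonempty L_chain; rewrite /parallel_collection size_map size_rev.
have rev_lt i : i < size L -> size L - i.+1 < size L by lia.
have nth_sp i : i < size L ->
    nth ([::], [::]) (map section_pair (rev L)) i
    = section_pair (nth ((0, 0), (0, 0)) L (size L - i.+1)).
  by move=> i_lt; rewrite (nth_map ((0, 0), (0, 0))) ?size_rev // nth_rev.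
split=> [i i_lt | i j i_lt_j j_lt].
  by rewrite nth_sp //; apply/section_pair_subsection/L_nonempty/mem_nth/rev_lt.
set bj := nth ((0, 0), (0, 0)) L (size L - j.+1).
set bi := nth ((0, 0), (0, 0)) L (size L - i.+1).
have /andP[x_before y_before] : before bj bi.
  by move/(pairwiseP ((0, 0), (0, 0))): L_chain; apply; rewrite ?inE; lia.
rewrite !nth_sp; try lia.
have [x_disj x_below] := segments_ordered (xlo bj) (xhi bi) X_uniq x_before.
have [y_disj y_below] := segments_ordered (ylo bj) (yhi bi) Y_uniq y_before.
by split.
Qed.

Lemma sum_sections (L : seq box) :
  \sum_(p <- map section_pair (rev L)) #|chords e p.1 p.2| = \sum_(b <- L) #|cpts b|.
Proof. by rewrite big_map big_rev; apply: eq_bigr => b _; rewrite chords_section. Qed.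

Lemma cpts_mem (b : box) (c : T * T) : c \in cpts b -> (c.1 \in X) && (c.2 \in Y).
Proof. by rewrite !inE => /andP[/and3P[-> -> _]]. Qed.

Lemma subchain_collection (L : seq box) (a : pred box) :
  {in L, forall b, 0 < #|cpts b|} -> pairwise before L ->
  let s := map section_pair (rev [seq b <- L | a b]) in
  parallel_collection X Y s /\
  \sum_(p <- s) #|chords e p.1 p.2| = \sum_(b <- L | a b) #|cpts b|.
Proof.
move=> L_nonempty L_chain; split; last by rewrite sum_sections big_filter.
apply: parallel_of_chain (pairwise_filter _ L_chain) => b.
by rewrite mem_filter => /andP[_ /L_nonempty].
Qed.

(* A line of the grid through a chord consists of chords sharing its
   endpoint in X (resp. Y); so a line-heavy box has a high-degree vertex. *)
Lemma line_heavy_vertex (th : R) (b : box) :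
  heavy_line th xpos (cpts b) \/ heavy_line th ypos (cpts b) ->
  let p := section_pair b in
  exists v, v \in p.1 ++ p.2 /\
    (INR #|[set c in chords e p.1 p.2 | (c.1 == v) || (c.2 == v)]|
       >= INR #|chords e p.1 p.2| / th)%R.
Proof.
rewrite /= chords_section.
have in_b c : c \in cpts b -> c \in chords e (section_pair b).1 (section_pair b).2.
  by rewrite chords_section.
case=> -[c cb heavy_c].
- exists c.1; split; first by have := in_b c cb; rewrite inE mem_cat => /and3P[->].
  apply/Rle_ge/(Rle_trans _ _ _ heavy_c)/le_INR/leP/subset_leq_card/subsetP => d.
  rewrite inE => /andP[db /eqP same_x]; rewrite inE db /=.
  have /andP[cX _] := cpts_mem cb; have /andP[dX _] := cpts_mem db.
  by rewrite (index_inj c.1 dX cX same_x) eqxx.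
- exists c.2; split.
    by have := in_b c cb; rewrite inE mem_cat => /and3P[_ ->]; rewrite orbT.
  apply/Rle_ge/(Rle_trans _ _ _ heavy_c)/le_INR/leP/subset_leq_card/subsetP => d.
  rewrite inE => /andP[db /eqP same_y]; rewrite inE db /=.
  have /andP[_ cY] := cpts_mem cb; have /andP[_ dY] := cpts_mem db.
  by rewrite (index_inj c.2 dY cY same_y) eqxx orbT.
Qed.

(* Crossing chords of the grid are interlacing chords; so a cross-heavy box
   has a chord interlacing many others. *)
Lemma cross_heavy_interlace (th : R) (b : box) :
  heavy_cross xpos ypos th (cpts b) ->
  let p := section_pair b in
  exists c, c \in chords e p.1 p.2 /\
    (INR #|[set d in chords e p.1 p.2 | interlace X Y c d]|
       >= INR #|chords e p.1 p.2| / th)%R.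
Proof.
rewrite /= chords_section => -[c cb heavy_c]; exists c; split=> //.
apply/Rle_ge/(Rle_trans _ _ _ heavy_c)/le_INR/leP/subset_leq_card/subsetP => d.
rewrite inE => /andP[db cross]; rewrite inE db /=.
have /andP[cX cY] := cpts_mem cb; have /andP[dX dY] := cpts_mem db.
move: cross; rewrite /crossing /interlace /parallel_chords /above /xpos /ypos.
rewrite cX cY dX dY /= => cross.
have x_neq : c.1 != d.1 by apply: contraTneq cross => ->; lia.
have y_neq : c.2 != d.2 by apply: contraTneq cross => ->; lia.
by rewrite x_neq y_neq /=; lia.
Qed.

Lemma select_heavy_kind (th : R) (L : seq box) :
  {in L, forall b, 0 < #|cpts b| /\ heavy xpos ypos th (cpts b)} -> pairwise before L ->
  exists s : seq (seq T * seq T),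
    [/\ parallel_collection X Y s,
        \sum_(b <- L) #|cpts b| <= (\sum_(p <- s) #|chords e p.1 p.2|).*2
      & (forall p, p \in s -> exists v, v \in p.1 ++ p.2 /\
          (INR #|[set c in chords e p.1 p.2 | (c.1 == v) || (c.2 == v)]|
             >= INR #|chords e p.1 p.2| / th)%R)
        \/
        (forall p, p \in s -> exists c, c \in chords e p.1 p.2 /\
          (INR #|[set d in chords e p.1 p.2 | interlace X Y c d]|
             >= INR #|chords e p.1 p.2| / th)%R)].
Proof.
move=> L_ok L_chain; have L_nonempty : {in L, forall b, 0 < #|cpts b|} by move=> b /L_ok[].
pose line b := holds (heavy_line th xpos (cpts b) \/ heavy_line th ypos (cpts b)).
have [line_coll line_sum] := subchain_collection line L_nonempty L_chain.
have [cross_coll cross_sum] := subchain_collection (fun b => ~~ line b) L_nonempty L_chain.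
rewrite /= in cross_coll cross_sum.
set s_line := map section_pair (rev [seq b <- L | line b]) in line_coll line_sum *.
set s_cross := map section_pair (rev [seq b <- L | ~~ line b]) in cross_coll cross_sum *.
have sum_split : \sum_(b <- L) #|cpts b|
    = \sum_(p <- s_line) #|chords e p.1 p.2| + \sum_(p <- s_cross) #|chords e p.1 p.2|.
  by rewrite line_sum cross_sum (bigID line).
rewrite sum_split.
case: (leqP (\sum_(p <- s_cross) #|chords e p.1 p.2|) (\sum_(p <- s_line) #|chords e p.1 p.2|))
  => [cross_le | line_lt].
- exists s_line; split=> //; first by lia.
  left=> p /mapP[b]; rewrite mem_rev mem_filter => /andP[/holdsP b_line _] ->.
  exact: line_heavy_vertex.
- exists s_cross; split=> //; first by lia.
  right=> p /mapP[b]; rewrite mem_rev mem_filter => /andP[/holdsP b_light /L_ok[_]].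
  by case=> [h | h | b_cross] ->; [case: b_light; left | case: b_light; right |
    exact: cross_heavy_interlace].
Qed.

End ChordGrid.

Theorem lemma4p2 (T : finType) (e : rel T)
  (e_sym : symmetric e) (e_irr : irreflexive e)
  (X Y : seq T) (hX : is_path e X) (hY : is_path e Y)
  (hXY : [disjoint X & Y])
  (hm : 2 <= #|chords e X Y|) :
  exists s : seq (seq T * seq T),
    parallel_collection X Y s /\
    (INR (\sum_(p <- s) #|chords e p.1 p.2|) >= INR #|chords e X Y| / 24)%R /\
    ((forall p, p \in s ->
        exists v, v \in p.1 ++ p.2 /\
          (INR #|[set c in chords e p.1 p.2 | (c.1 == v) || (c.2 == v)]|
             >= INR #|chords e p.1 p.2| / (6 * log2 (INR #|chords e X Y|)))%R)
     \/
     (forall p, p \in s ->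
        exists c, c \in chords e p.1 p.2 /\
          (INR #|[set d in chords e p.1 p.2 | interlace X Y c d]|
             >= INR #|chords e p.1 p.2| / (6 * log2 (INR #|chords e X Y|)))%R)).
Proof.
have X_uniq := is_path_uniq hX; have Y_uniq := is_path_uniq hY.
have [th_ge3 factor_half] := threshold_bounds hm.
set m := #|chords e X Y| in hm th_ge3 factor_half *.
set th := (6 * log2 (INR m))%R in th_ge3 factor_half *.
have [L [L_ok L_chain L_sum]] : exists L, decomposition (chords e X Y) (xpos X) (ypos Y)
    th ((0, size X), (0, size Y)) (trunc_log 2 m) L.
  by apply: decompose_box; rewrite // pts_whole; apply: trunc_log_ltn.
rewrite pts_whole -/m in L_sum.
have L_heavy : {in L, forall b, let S := pts (chords e X Y) (xpos X) (ypos Y) b in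
                                0 < #|S| /\ heavy (xpos X) (ypos Y) th S}.
  by move=> b /L_ok[].
have [s [s_coll s_sum s_heavy]] := select_heavy_kind X_uniq Y_uniq L_heavy L_chain.
exists s; split=> //; split=> //.
move/leP/le_INR: s_sum; rewrite -mul2n mult_INR [INR 2]/= => s_sum.
have := Rmult_le_compat_l _ _ _ (pos_INR m) factor_half; have := pos_INR m; lra.
Qed.
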